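(* Let $A$ be a set, $T=A^*$, $Y$ a semilattice and $\cdot$ a left partial action of $T$ on $Y$ satisfying axioms (A), (B), (C) which is a partially defined action, with reverse right partial action $\circ$. Let $\sim$ and $\approx$ be the equivalence relations on $Y\times T$ defined in the context. Then: (1) every $\sim$-class $B$ contains a unique element $(x,w)$ (called canonical) with $|w|=\min\{|u|\colon (y,u)\in B\}$; moreover, if $(x,w)$ is canonical and $(y,u)\sim(x,w)$, then $x\circ t$ is defined and $(y,u)=(x\circ t,wt)$ for some $t\in A^*$; (2) the equivalences $\sim$ and $\approx$ on $Y\times T$ coincide.
   Context: $A^*$ is the free monoid on $A$ and $|w|$ is the length of the word $w$ (the empty word has length $0$). A left partial action of $T$ on $Y$: $1\cdot y=y$ always defined; if $t\cdot y$, $s\cdot(t\cdot y)$ are defined then $(st)\cdot y$ is defined and equals it. With $\varphi_t\colon y\mapsto t\cdot y$: (A) $\mathrm{dom}\varphi_t$, $\mathrm{ran}\varphi_t$ are order ideals; (B) $\varphi_t$ is an order-isomorphism between them; (C) $\mathrm{dom}\varphi_t\ne\varnothing$. It is a partially defined action if $(st)\cdot x$ is defined iff $t\cdot x$ and $s\cdot(t\cdot x)$ are defined. Reverse: $y\circ t$ defined iff $y\in\mathrm{ran}\varphi_t$, and $y\circ t=\varphi_t^{-1}(y)$. For $(x,s),(y,t)\in Y\times T$ put $(x,s)\to(y,t)$ if there is $p\in T$ with $s=tp$, $p\cdot x$ defined and $p\cdot x=y$. Let $\sim$ be the equivalence relation generated by $\to$, with classes $[x,s]_\sim$. On $(Y\times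 T)/\!\sim$ set $C\ge D$ if there are $(x,s)\in C$ and $(y,s)\in D$ with $x\ge y$ (a preorder). Let $(x,s)\approx(y,t)$ iff $[x,s]_\sim\le[y,t]_\sim$ and $[y,t]_\sim\le[x,s]_\sim$. *)

From HB Require Import structures.
From mathcomp Require Import all_boot all_order.
From Stdlib Require Import Relations.Relation_Operators.
Set Implicit Arguments. Unset Strict Implicit. Unset Printing Implicit Defensive.
Import Order.TTheory.
Local Open Scope order_scope.

(* T = A^* is [seq A] with concatenation; the product st is [s ++ t].
   A left partial action of T on Y is encoded as [act : seq A -> Y -> option Y],
   where [act t y = Some z] means "t . y is defined and equals z". *)

Section PA.
Variables (d : Order.disp_t) (Y : meetSemilatticeType d) (A : Type).
Variable act : seq A -> Y -> option Y.

Definition defined_at (t : seq A) (y : Y) : Prop := exists z, act t y = Some z.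

Definition dom_phi (t : seq A) (y : Y) : Prop := defined_at t y.
Definition ran_phi (t : seq A) (z : Y) : Prop := exists y, act t y = Some z.

Definition order_ideal (P : Y -> Prop) : Prop :=
  forall x y, P x -> y <= x -> P y.

Definition left_partial_action : Prop :=
  (forall y, act [::] y = Some y) /\
  (forall s t y z w, act t y = Some z -> act s z = Some w -> act (s ++ t) y = Some w).

Definition axiom_A : Prop :=
  forall t, order_ideal (dom_phi t) /\ order_ideal (ran_phi t).

Definition axiom_B : Prop :=
  forall t x y x' y', act t x = Some x' -> act t y = Some y' ->
    (x <= y) = (x' <= y').

Definition axiom_C : Prop := forall t, exists y, dom_phi t y.

Definition partially_defined_action : Prop :=
  forall s t x, defined_at (s ++ t) x <->
    (exists z, act t x = Some z /\ defined_at s z).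

(* reverse right partial action: [rev_act y t x] means "y o t is defined
   and y o t = x", i.e. y \in ran phi_t and phi_t^{-1}(y) = x. *)
Definition rev_act (y : Y) (t : seq A) (x : Y) : Prop := act t x = Some y.

Definition arrow (a b : Y * seq A) : Prop :=
  exists p, a.2 = b.2 ++ p /\ act p a.1 = Some b.1.

Definition sim : Y * seq A -> Y * seq A -> Prop := clos_refl_sym_trans _ arrow.

Definition cls_le (a b : Y * seq A) : Prop :=
  exists (x y : Y) (s : seq A), sim (x, s) b /\ sim (y, s) a /\ y <= x.

Definition approx (a b : Y * seq A) : Prop := cls_le a b /\ cls_le b a.

Definition canonical (a : Y * seq A) : Prop :=
  forall b, sim b a -> size a.2 <= size b.2.

End PA.

From HB Require Import structures.
From mathcomp Require Import all_boot all_order.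
From Stdlib Require Import Relations.Relation_Operators.
Import Order.TTheory.
Local Open Scope order_scope.
Set Implicit Arguments. Unset Strict Implicit. Unset Printing Implicit Defensive.

(* Every pair (y, u) reduces along -> to a normal form obtained by letting the
   longest suffix p of u that can act on y do so: u = w p and (y, u) -> (p.y, w).
   Because the action is partially defined, the normal form is invariant under
   ->, so ~-classes are exactly the fibres of the normal-form map, and the normal
   form is the canonical element of its class. If [a] <= [b], comparing the
   normal forms of two witnesses (x, s) ~ b and (y, s) ~ a with y <= x shows
   (using that phi_t is an order-isomorphism and that dom phi_r is an order
   ideal) that the word of the normal form of b extends that of a, and that
   their first components are ordered when the words agree; applied in both
   directions this forces equal normal forms. *)

Lemma eq_cat_cases (A : Type) (w1 w2 t1 t2 : seq A) :
  w1 ++ t1 = w2 ++ t2 ->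
  (exists r, w2 = w1 ++ r /\ t1 = r ++ t2) \/
  (exists r, w1 = w2 ++ r /\ t2 = r ++ t1).
Proof.
elim: w1 w2 => [|a w1 IH] [|b w2] /=.
- by move=> ->; left; exists [::].
- by move=> ->; left; exists (b :: w2).
- by move=> <-; right; exists (a :: w1).
- by case=> -> /IH [[r [-> ->]]|[r [-> ->]]]; [left|right]; exists r.
Qed.

Section NormalForm.
Variables (d : Order.disp_t) (Y : meetSemilatticeType d) (A : Type).
Variable act : seq A -> Y -> option Y.
Hypothesis act_lpa : left_partial_action act.
Hypothesis act_pda : partially_defined_action act.

Fixpoint nf (y : Y) (u : seq A) : Y * seq A :=
  match u with
  | [::] => (y, [::])
  | a :: u' => if act u y is Some z then (z, [::])
               else ((nf y u').1, a :: (nf y u').2)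
  end.

Definition canon (c : Y * seq A) : Y * seq A := nf c.1 c.2.

Lemma act_nil_eq (y z : Y) : act [::] y = Some z -> z = y.
Proof. by rewrite (proj1 act_lpa) => -[]. Qed.

Lemma arrow_canon (c : Y * seq A) : arrow act c (canon c).
Proof.
case: c => y u; rewrite /arrow /canon /=.
elim: u => [|a u [p [Hu Hp]]] /=; first by exists [::]; rewrite (proj1 act_lpa).
case auy: (act (a :: u) y) => [z|]; first by exists (a :: u).
by exists p; rewrite /= -Hu.
Qed.

Lemma sim_canon (c : Y * seq A) : sim act (canon c) c.
Proof. exact/rst_sym/rst_step/arrow_canon. Qed.

Lemma nf_shift (p : seq A) (x y : Y) (t : seq A) :
  act p x = Some y -> nf x (t ++ p) = nf y t.
Proof.
move=> pxy; elim: t => [|a t IH] /=.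
  by case: p pxy => [/act_nil_eq ->|b p /= ->].
case atpx: (act (a :: t ++ p) x) => [z|].
  have [m [pxm [v atmv]]] := proj1 (act_pda (a :: t) p x) (ex_intro _ z atpx).
  move: atmv; rewrite pxy in pxm; case: pxm => <- atyv.
  by have := proj2 act_lpa _ _ _ _ _ pxy atyv; rewrite /= atpx atyv => -[->].
case atyv: (act (a :: t) y) => [v|]; last by rewrite IH.
by have := proj2 act_lpa _ _ _ _ _ pxy atyv; rewrite /= atpx.
Qed.

Lemma canon_arrow (a b : Y * seq A) : arrow act a b -> canon a = canon b.
Proof.
by case: a b => [x s] [y t] [p [/= -> pxy]]; rewrite /canon /= (nf_shift _ pxy).
Qed.

Lemma sim_canonE (a b : Y * seq A) : sim act a b <-> canon a = canon b.
Proof.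
split; first by elim=> [??/canon_arrow|//|?? _ ->|??? _ -> _ ->].
move=> eq_ab; apply: rst_trans (sim_canon b); rewrite -eq_ab.
exact/rst_sym/sim_canon.
Qed.

Lemma canon_idem (c : Y * seq A) : canon (canon c) = canon c.
Proof. exact/esym/canon_arrow/arrow_canon. Qed.

Lemma size_canon (c : Y * seq A) : (size (canon c).2 <= size c.2)%N.
Proof. by have [p [-> _]] := arrow_canon c; rewrite size_cat leq_addr. Qed.

Lemma canonical_canon (c : Y * seq A) : canonical act (canon c).
Proof.
by move=> b /sim_canonE; rewrite canon_idem => <-; rewrite leEnat size_canon.
Qed.

Lemma canonical_fixed (c : Y * seq A) : canonical act c -> canon c = c.
Proof.
move=> can_c; have [p [Hu Hp]] := arrow_canon c.
have := can_c _ (sim_canon c); rewrite leEnat Hu size_cat -{2}[size (canon c).2]addn0.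
rewrite leq_add2l leqn0 => /eqP/size0nil p0; move: Hu Hp; rewrite p0 cats0.
by move: (canon c) => k Hu /act_nil_eq Hk; case: c {can_c} k Hu Hk => ?? [??] /= -> ->.
Qed.

Lemma canon_irreducible (z : Y) (w w' r : seq A) :
  canon (z, w) = (z, w) -> w = w' ++ r -> defined_at act r z -> r = [::].
Proof.
move=> fix_zw eq_w [v rzv].
have zw_vw' : arrow act (z, w) (v, w') by exists r.
have := size_canon (v, w'); rewrite -(canon_arrow zw_vw') fix_zw /= eq_w size_cat.
by rewrite -{2}[size w']addn0 leq_add2l leqn0 => /eqP/size0nil.
Qed.

Lemma sim_cls_le (a b : Y * seq A) : sim act a b -> cls_le act a b.
Proof.
move=> ab; exists a.1, a.1, a.2; rewrite -surjective_pairing.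
by do !split=> //; exact: rst_refl.
Qed.

Section ClassPreorder.
Hypothesis act_A : axiom_A act.
Hypothesis act_B : axiom_B act.

Lemma cls_le_canon (a b : Y * seq A) : cls_le act a b ->
  exists2 r, (canon b).2 = (canon a).2 ++ r & r = [::] -> (canon a).1 <= (canon b).1.
Proof.
move=> [x [y [s [/sim_canonE xs_b [/sim_canonE ys_a le_yx]]]]].
have [t [/= Hs Ht]] := arrow_canon (x, s); have [t' [/= Hs' Ht']] := arrow_canon (y, s).
rewrite xs_b in Hs Ht; rewrite ys_a in Hs' Ht'; have fix_a := canon_idem a.
case: (canon a) fix_a Hs' Ht' => za wa fix_a Hs' Ht'.
case: (canon b) Hs Ht => zb wb /= Hs Ht; rewrite /= in Ht'; rewrite Hs /= in Hs'.
case/eq_cat_cases: Hs' => -[r [eq_w eq_t]]; [subst t | subst t'; rewrite eq_w].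
- have [m [tam rm]] := proj1 (act_pda r t' x) (ex_intro _ zb Ht).
  have le_am : za <= m by rewrite -(act_B Ht' tam).
  have r0 := canon_irreducible fix_a eq_w (proj1 (act_A r) _ _ rm le_am).
  rewrite r0 cats0 in eq_w Ht; subst wa; exists [::]; rewrite ?cats0 // => _.
  by move: Ht; rewrite tam => -[<-].
- have [m [tym _]] := proj1 (act_pda r t y) (ex_intro _ za Ht').
  exists r => // r0; subst r; move: Ht'; rewrite tym => -[<-].
  by rewrite -(act_B tym Ht).
Qed.

Lemma approx_canon (a b : Y * seq A) : approx act a b -> canon a = canon b.
Proof.
move=> [/cls_le_canon [r Er Hr] /cls_le_canon [r' Er' Hr']].
have := congr1 size Er; rewrite Er' !size_cat -addnA -{1}[size _]addn0 => /eqP.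
rewrite eqn_add2l eq_sym addn_eq0 => /andP[/eqP/size0nil r'0 /eqP/size0nil r0].
move: Er (Hr r0) (Hr' r'0); rewrite r0 cats0.
case: (canon a) => za wa; case: (canon b) => zb wb /= -> le_ab le_ba.
by congr pair; apply: le_anti; rewrite le_ab le_ba.
Qed.

End ClassPreorder.

End NormalForm.

Theorem lemma5p2 (d : Order.disp_t) (Y : meetSemilatticeType d) (A : Type)
  (act : seq A -> Y -> option Y) :
  left_partial_action act -> axiom_A act -> axiom_B act -> axiom_C act ->
  partially_defined_action act ->
  ((forall B : Y * seq A,
      exists! c : Y * seq A, sim act c B /\ canonical act c) /\
   (forall (x : Y) (w : seq A) (y : Y) (u : seq A),
      canonical act (x, w) -> sim act (y, u) (x, w) ->
      exists t : seq A, rev_act act x t y /\ u = w ++ t)) /\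
  (forall a b : Y * seq A, sim act a b <-> approx act a b).
Proof.
move=> lpa act_A act_B _ pda; split; [split|].
- move=> B; exists (canon act B); split.
    by split; [exact: sim_canon | exact: canonical_canon].
  by move=> c [/(sim_canonE lpa pda) <- /(canonical_fixed lpa)].
- move=> x w y u can_xw /(sim_canonE lpa pda).
  rewrite (canonical_fixed lpa can_xw) => canon_yu.
  have [t [u_wt tyx]] := arrow_canon lpa (y, u).
  by rewrite canon_yu in u_wt tyx; exists t.
- move=> a b; split=> [ab | /(approx_canon lpa pda act_A act_B) ab].
    by split; apply: sim_cls_le; last exact: rst_sym.
  exact/(sim_canonE lpa pda).
Qed.
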